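(* Let $k$ be a complete non-archimedean valued field of characteristic $p > 0$, and let $r = (r_1,\ldots,r_n)$ be a tuple of positive real numbers. If $[k : k^p] < \infty$, where $k^p:=\{a^p\mid a\in k\}$, then $\Omega_{k\{r^{-1}T\}/k[T]} = 0$.
   Context: $k\{r^{-1}T\} = k\{r_1^{-1}T_1,\ldots,r_n^{-1}T_n\}$ is the Banach $k$-algebra of power series $\sum_{\nu\in\mathbb{Z}_{\ge0}^n} a_\nu T^\nu$, $a_\nu\in k$, with $|a_\nu| r^\nu \to 0$; $k[T]=k[T_1,\ldots,T_n]$. $\Omega_{k\{r^{-1}T\}/k[T]}$ is the module of Kähler differentials. *)

From HB Require Import structures.
From mathcomp Require Import all_boot all_order all_algebra.
From mathcomp Require Import boolp reals.
From Stdlib Require List.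

Set Implicit Arguments.
Unset Strict Implicit.
Unset Printing Implicit Defensive.

Import Order.TTheory GRing.Theory Num.Theory.
Local Open Scope ring_scope.

Definition nonarch_abs (R : realType) (k : fieldType) (abs : k -> R) : Prop :=
  [/\ forall x : k, 0 <= abs x,
      forall x : k, abs x = 0 <-> x = 0,
      forall x y : k, abs (x * y) = abs x * abs y
    & forall x y : k, abs (x + y) <= Num.max (abs x) (abs y)].

Definition abs_complete (R : realType) (k : fieldType) (abs : k -> R) : Prop :=
  forall u : nat -> k,
    (forall eps : R, 0 < eps -> exists N : nat,
        forall m l : nat, (N <= m)%N -> (N <= l)%N -> abs (u m - u l) < eps) ->
    exists lim : k, forall eps : R, 0 < eps -> exists N : nat,
        forall m : nat, (N <= m)%N -> abs (u m - lim) < eps.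

(* [k : k^p] < oo : k is a finite-dimensional vector space over its subfield
   k^p = {a^p | a in k}, i.e. k is spanned over k^p by finitely many vectors. *)
Definition finite_p_degree (k : fieldType) (p : nat) : Prop :=
  exists (m : nat) (b : 'I_m -> k),
    forall x : k, exists c : 'I_m -> k, x = \sum_(i < m) (c i) ^+ p * b i.

Definition mindex (n : nat) := {ffun 'I_n -> nat}.

Definition pseries (k : fieldType) (n : nat) := mindex n -> k.

Section PowerSeries.
Variables (k : fieldType) (n : nat).

Definition ps0 : pseries k n := fun _ => 0.
Definition ps1 : pseries k n := fun nu => if nu == [ffun _ => 0%N] then 1 else 0.
Definition ps_add (f g : pseries k n) : pseries k n := fun nu => f nu + g nu.
Definition ps_opp (f : pseries k n) : pseries k n := fun nu => - f nu.
(* Cauchy product: (f g)_nu = sum_{mu <= nu} f_mu g_(nu - mu). *)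
Definition ps_mul (f g : pseries k n) : pseries k n := fun nu =>
  \sum_(mu : {ffun 'I_n -> 'I_((\sum_(i < n) nu i).+1)}
          | [forall i, (nat_of_ord (mu i) <= nu i)%N])
     f [ffun i => nat_of_ord (mu i)] * g [ffun i => (nu i - mu i)%N].

Definition is_poly (f : pseries k n) : Prop :=
  exists s : seq (mindex n), forall nu, nu \notin s -> f nu = 0.

End PowerSeries.

(* k{r^{-1}T}: series sum a_nu T^nu with |a_nu| r^nu -> 0 as nu -> oo
   (i.e. for each eps > 0 only finitely many nu have |a_nu| r^nu >= eps). *)
Definition tate_series (R : realType) (k : fieldType) (abs : k -> R)
    (n : nat) (r : 'I_n -> R) (f : pseries k n) : Prop :=
  forall eps : R, 0 < eps -> exists s : seq (mindex n),
    forall nu : mindex n,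
      eps <= abs (f nu) * \prod_(i < n) (r i) ^+ (nu i) -> nu \in s.

(* For a subring A (given by a predicate) of the ring of power series and a
   subring B of A, Omega_{A/B} is the free A-module on the symbols d a (a in A)
   modulo the A-submodule N generated by
     d(a + b) - d a - d b,   d(a b) - a d b - b d a   (a, b in A),
     d c                                              (c in B).
   An element of the free module is represented by its coefficient function
   (generator |-> coefficient). Omega_{A/B} = 0 iff every generator d a lies in
   N, i.e. is an A-linear combination of the relations. *)

Section Kaehler.
Variables (k : fieldType) (n : nat).
Local Notation ps := (pseries k n).

Definition ps_gen (a : ps) : ps -> ps :=
  fun g => if `[< g = a >] then @ps1 k n else @ps0 k n.

Inductive kahler_rel :=
  | RelAdd of ps & ps
  | RelMul of ps & ps
  | RelConst of ps.

Definition rel_vec (x : kahler_rel) : ps -> ps :=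
  match x with
  | RelAdd a b => fun g =>
      ps_add (ps_gen (ps_add a b) g)
             (ps_opp (ps_add (ps_gen a g) (ps_gen b g)))
  | RelMul a b => fun g =>
      ps_add (ps_gen (ps_mul a b) g)
             (ps_opp (ps_add (ps_mul a (ps_gen b g)) (ps_mul b (ps_gen a g))))
  | RelConst c => ps_gen c
  end.

Definition rel_ok (A B : ps -> Prop) (x : kahler_rel) : Prop :=
  match x with
  | RelAdd a b => A a /\ A b
  | RelMul a b => A a /\ A b
  | RelConst c => B c
  end.

Definition kaehler_zero (A B : ps -> Prop) : Prop :=
  forall a : ps, A a ->
    exists l : seq (ps * kahler_rel),
      (forall x, List.In x l -> A x.1 /\ rel_ok A B x.2) /\
      ps_gen a = (fun g => \big[@ps_add k n/@ps0 k n]_(x <- l) ps_mul x.1 (rel_vec x.2 g)).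

End Kaehler.

(* Let b_1, ..., b_m span k over k^p. Every x in k is x = sum_j c_j(x)^p b_j,
   and since the k^p-span of finitely many vectors is closed in the complete
   field k (induction on m), the coordinates can be chosen with
   |c_j(x)|^p <= C |x|. Splitting each exponent as nu = p mu + al with
   0 <= al_i < p then writes a in k{r^-1 T} as
     a = sum_(j, al) b_j T^al g_(j,al)^p,   g_(j,al) = sum_mu c_j(a_(p mu + al)) T^mu,
   where the bound on c_j keeps every g_(j,al) in k{r^-1 T}. As b_j T^al lies
   in k[T] and d(g^p) = p g^(p-1) dg = 0, each d a is a combination of the
   defining relations of the module of differentials, which therefore vanishes. *)

From HB Require Import structures.
From mathcomp Require Import all_boot all_order all_algebra.
From mathcomp Require Import boolp reals.
From mathcomp Require Import zify ring lra.
Import Order.TTheory GRing.Theory Num.Theory.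
Local Open Scope ring_scope.
Set Implicit Arguments.
Unset Strict Implicit.
Unset Printing Implicit Defensive.

Section MultiIndex.
Variable n : nat.
Local Notation mi := (mindex n).

Definition mzero : mi := [ffun _ => 0%N].
Definition madd (x y : mi) : mi := [ffun i => (x i + y i)%N].
Definition msub (x y : mi) : mi := [ffun i => (x i - y i)%N].
Definition mscale (j : nat) (x : mi) : mi := [ffun i => (j * x i)%N].
Definition mdiv (j : nat) (x : mi) : mi := [ffun i => (x i %/ j)%N].
Definition mmod (j : nat) (x : mi) : mi := [ffun i => (x i %% j)%N].
Definition mle (x y : mi) : bool := [forall i, (x i <= y i)%N].

Lemma mleP (x y : mi) : reflect (forall i, (x i <= y i)%N) (mle x y).
Proof. exact: forallP. Qed.

Lemma mle0x (x : mi) : mle mzero x.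
Proof. by apply/mleP => i; rewrite ffunE. Qed.

Lemma mle_trans (x y z : mi) : mle x y -> mle y z -> mle x z.
Proof. by move=> /mleP xy /mleP yz; apply/mleP => i; apply: leq_trans (xy i) (yz i). Qed.

Lemma mle_subl (x y : mi) : mle (msub x y) x.
Proof. by apply/mleP => i; rewrite ffunE leq_subr. Qed.

Lemma mle_addr (x y : mi) : mle x (madd x y).
Proof. by apply/mleP => i; rewrite ffunE leq_addr. Qed.

Lemma subnmK (x y : mi) : mle y x -> madd y (msub x y) = x.
Proof. by move/mleP => yx; apply/ffunP => i; rewrite !ffunE subnKC. Qed.

Lemma subnmKC (x y : mi) : mle y x -> msub x (msub x y) = y.
Proof. by move/mleP => yx; apply/ffunP => i; rewrite !ffunE subKn. Qed.

Lemma addnmK (x y : mi) : msub (madd x y) x = y.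
Proof. by apply/ffunP => i; rewrite !ffunE addKn. Qed.

Lemma subnmDA (x y z : mi) : msub x (madd y z) = msub (msub x y) z.
Proof. by apply/ffunP => i; rewrite !ffunE subnDA. Qed.

Lemma subnm0 (x : mi) : msub x mzero = x.
Proof. by apply/ffunP => i; rewrite !ffunE subn0. Qed.

Lemma mdiv_mscale j (x : mi) : (0 < j)%N -> mdiv j (mscale j x) = x.
Proof. by move=> j0; apply/ffunP => i; rewrite !ffunE mulKn. Qed.

Lemma mdivmod j (x : mi) : madd (mscale j (mdiv j x)) (mmod j x) = x.
Proof. by apply/ffunP => i; rewrite !ffunE mulnC -divn_eq. Qed.

(* The finitely many multi-indices below [nu], enumerated as in [ps_mul]. *)
Definition mbox (nu : mi) : seq mi :=
  [seq [ffun i => nat_of_ord (mu i)] |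
     mu : {ffun 'I_n -> 'I_((\sum_(i < n) nu i).+1)}
        <- enum (fun mu : {ffun 'I_n -> 'I_((\sum_(i < n) nu i).+1)} =>
                   [forall i, (nat_of_ord (mu i) <= nu i)%N])].

Lemma mem_mbox nu x : (x \in mbox nu) = mle x nu.
Proof.
apply/mapP/mleP => [[mu]|xnu].
  by rewrite mem_enum => /forallP mu_le -> i; rewrite ffunE mu_le.
have x_small i : (x i < (\sum_(j < n) nu j).+1)%N.
  by rewrite ltnS (leq_trans (xnu i)) // (bigD1 i) //= leq_addr.
exists [ffun i => Ordinal (x_small i)]; last by apply/ffunP => i; rewrite !ffunE.
by rewrite mem_enum; apply/forallP => i; rewrite ffunE /= xnu.
Qed.

Lemma mbox_uniq nu : uniq (mbox nu).
Proof.
rewrite map_inj_uniq ?enum_uniq // => x y /ffunP xy; apply/ffunP => i.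
by apply: val_inj; move: (xy i); rewrite !ffunE.
Qed.

Lemma perm_mbox_sub nu : perm_eq (mbox nu) [seq msub nu x | x <- mbox nu].
Proof.
apply: uniq_perm; rewrite ?mbox_uniq //.
  rewrite map_inj_in_uniq ?mbox_uniq // => x y; rewrite !mem_mbox => xnu ynu xy.
  by rewrite -(subnmKC xnu) xy subnmKC.
move=> x; rewrite mem_mbox; apply/idP/mapP => [xnu|[y _ ->]]; last exact: mle_subl.
by exists (msub nu x); rewrite ?mem_mbox ?mle_subl ?subnmKC.
Qed.

Lemma perm_mbox_le nu mu : mle mu nu ->
  perm_eq (mbox mu) [seq x <- mbox nu | mle x mu].
Proof.
move=> munu; apply: uniq_perm; rewrite ?filter_uniq ?mbox_uniq // => x.
rewrite mem_filter !mem_mbox; apply/idP/andP => [xmu|[] //].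
by split; last exact: mle_trans xmu munu.
Qed.

Lemma perm_mbox_ge nu la : mle la nu ->
  perm_eq [seq x <- mbox nu | mle la x] [seq madd la x | x <- mbox (msub nu la)].
Proof.
move=> /mleP lanu; apply: uniq_perm; rewrite ?filter_uniq ?mbox_uniq //.
  by rewrite map_inj_uniq ?mbox_uniq // => x y xy; rewrite -(addnmK la x) xy addnmK.
move=> x; rewrite mem_filter mem_mbox; apply/andP/mapP => [[/mleP lax /mleP xnu]|].
  exists (msub x la); last by rewrite subnmK //; apply/mleP.
  by rewrite mem_mbox; apply/mleP => i; move: (lax i) (xnu i); rewrite !ffunE; lia.
case=> y; rewrite mem_mbox => /mleP ynu ->; split; apply/mleP => i; rewrite !ffunE.
  exact: leq_addr.
by move: (ynu i) (lanu i); rewrite !ffunE; lia.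
Qed.

End MultiIndex.

Section PowerSeriesRing.
Variables (k : fieldType) (n : nat).
Local Notation mi := (mindex n).

Lemma ps_mulE (f g : pseries k n) nu :
  ps_mul f g nu = \sum_(mu <- mbox nu) f mu * g (msub nu mu).
Proof.
rewrite /ps_mul /mbox big_map big_enum_cond /=.
apply: eq_big => [mu|mu _]; first by rewrite andbT.
by congr (_ * g _); apply/ffunP => i; rewrite !ffunE.
Qed.

Lemma ps_mulC (f g : pseries k n) : ps_mul f g = ps_mul g f.
Proof.
apply: funext => nu; rewrite !ps_mulE (perm_big _ (perm_mbox_sub nu)) big_map.
by apply: eq_big_seq => x; rewrite mem_mbox => xnu; rewrite subnmKC // mulrC.
Qed.

Lemma ps_mulA (f g h : pseries k n) :
  ps_mul f (ps_mul g h) = ps_mul (ps_mul f g) h.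
Proof.
apply: funext => nu; rewrite !ps_mulE.
transitivity (\sum_(mu <- mbox nu) \sum_(la <- mbox nu)
   (if mle la mu then f la * g (msub mu la) * h (msub nu mu) else 0)); last first.
  apply: eq_big_seq => mu; rewrite mem_mbox => munu.
  rewrite ps_mulE (perm_big _ (perm_mbox_le munu)) big_filter mulr_suml.
  by rewrite big_mkcond [RHS]big_mkcond.
rewrite [RHS]exchange_big; apply: eq_big_seq => la; rewrite mem_mbox => lanu.
rewrite ps_mulE mulr_sumr -[in RHS]big_mkcond -[in RHS]big_filter.
rewrite (perm_big _ (perm_mbox_ge lanu)) [in RHS]big_map.
by apply: eq_bigr => x _; rewrite addnmK subnmDA mulrA.
Qed.

Lemma ps_mul1 (f : pseries k n) : ps_mul (@ps1 k n) f = f.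
Proof.
apply: funext => nu; rewrite ps_mulE (bigD1_seq (mzero n)) ?mem_mbox ?mle0x ?mbox_uniq //=.
rewrite /ps1 eqxx mul1r subnm0 big1 ?addr0 // => x /negbTE x_nz.
by rewrite x_nz mul0r.
Qed.

Lemma ps_mulDl (f g h : pseries k n) :
  ps_mul (ps_add f g) h = ps_add (ps_mul f h) (ps_mul g h).
Proof.
apply: funext => nu; rewrite /ps_add !ps_mulE -big_split /=.
by apply: eq_bigr => x _; rewrite mulrDl.
Qed.

Definition PS := pseries k n.
HB.instance Definition _ := Choice.on PS.

Lemma ps_addA : associative (@ps_add k n).
Proof. by move=> f g h; apply: funext => x; rewrite /ps_add addrA. Qed.
Lemma ps_addC : commutative (@ps_add k n).
Proof. by move=> f g; apply: funext => x; rewrite /ps_add addrC. Qed.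
Lemma ps_add0 : left_id (@ps0 k n) (@ps_add k n).
Proof. by move=> f; apply: funext => x; rewrite /ps_add add0r. Qed.
Lemma ps_addN : left_inverse (@ps0 k n) (@ps_opp k n) (@ps_add k n).
Proof. by move=> f; apply: funext => x; rewrite /ps_add addNr. Qed.

HB.instance Definition _ := GRing.isZmodule.Build PS ps_addA ps_addC ps_add0 ps_addN.

Lemma ps1_neq0 : (@ps1 k n : PS) != 0.
Proof.
apply/eqP => /(congr1 (fun f : PS => f (mzero n))).
by rewrite /ps1 eqxx => /eqP; rewrite oner_eq0.
Qed.

HB.instance Definition _ := GRing.Zmodule_isComNzRing.Build PS
  ps_mulA ps_mulC ps_mul1 ps_mulDl ps1_neq0.

Lemma psDE (f g : PS) nu : (f + g) nu = f nu + g nu. Proof. by []. Qed.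
Lemma psNE (f : PS) nu : (- f) nu = - f nu. Proof. by []. Qed.
Lemma psME (f g : PS) nu : (f * g) nu = \sum_(mu <- mbox nu) f mu * g (msub nu mu).
Proof. exact: ps_mulE. Qed.

Lemma ps_sumE I (s : seq I) (P : pred I) (F : I -> PS) nu :
  (\sum_(i <- s | P i) F i) nu = \sum_(i <- s | P i) F i nu.
Proof. by elim/big_rec2: _ => // i y1 y2 _ <-. Qed.

Lemma pchar_ps p : p \in [pchar k] -> p \in [pchar PS].
Proof.
rewrite !inE => /andP[-> /eqP pk0] /=; apply/eqP/funext => nu.
have natE j : (j%:R : PS) nu = j%:R * @ps1 k n nu.
  by elim: j => [|j IH]; rewrite ?mul0r // !mulrS psDE IH mulrDl mul1r.
by rewrite natE pk0 mul0r.
Qed.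

End PowerSeriesRing.

Section Monomials.
Variables (k : fieldType) (n : nat).
Local Notation mi := (mindex n).
Local Notation PS := (PS k n).

Definition psmon (c : k) (mu : mi) : PS := fun nu => if nu == mu then c else 0.

Lemma is_poly_psmon c mu : is_poly (psmon c mu).
Proof. by exists [:: mu] => nu; rewrite inE /psmon => /negbTE ->. Qed.

Lemma psmon_mulE c mu (f : PS) nu :
  (psmon c mu * f) nu = if mle mu nu then c * f (msub nu mu) else 0.
Proof.
rewrite psME; case: ifPn => [munu|mu_nle].
  rewrite (bigD1_seq mu) ?mem_mbox ?mbox_uniq //= /psmon eqxx big1 ?addr0 //.
  by move=> x /negbTE ->; rewrite mul0r.
rewrite big_seq big1 // => x; rewrite mem_mbox /psmon.
by case: eqP => [-> /(negP mu_nle)|_ _]; rewrite ?mul0r.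
Qed.

Lemma psmonM c d mu la : psmon c mu * psmon d la = psmon (c * d) (madd mu la).
Proof.
apply: funext => nu; rewrite psmon_mulE /psmon.
have [/eqP ->|nu_neq] := boolP (nu == madd mu la); first by rewrite mle_addr addnmK eqxx.
case: ifP => // munu; case: eqP; rewrite ?mulr0 // => la_eq.
by move: nu_neq; rewrite -la_eq subnmK ?eqxx.
Qed.

Lemma psmonX c mu j : psmon c mu ^+ j = psmon (c ^+ j) (mscale j mu).
Proof.
elim: j => [|j IH].
  by have -> : mscale 0 mu = mzero n by apply/ffunP => i; rewrite !ffunE.
by rewrite exprS IH psmonM exprS; congr psmon; apply/ffunP => i; rewrite !ffunE mulSn.
Qed.

Lemma psM_low_eq0 (f h : PS) nu :
  (forall mu, mle mu nu -> f mu = 0) -> (f * h) nu = 0.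
Proof.
move=> f_low; rewrite psME big_seq big1 // => x; rewrite mem_mbox => xnu.
by rewrite f_low // mul0r.
Qed.

Definition pstrunc (g : PS) (nu : mi) : PS := \sum_(mu <- mbox nu) psmon (g mu) mu.

Lemma pstruncE (g : PS) nu la : mle la nu -> pstrunc g nu la = g la.
Proof.
move=> lanu; rewrite /pstrunc ps_sumE (bigD1_seq la) ?mem_mbox ?mbox_uniq //= /psmon eqxx.
by rewrite big1 ?addr0 // => x /negbTE; rewrite eq_sym => ->.
Qed.

Variable p : nat.
Hypothesis pchar_p : p \in [pchar k].

Lemma pchar_gt0 : (0 < p)%N.
Proof. exact/prime_gt0/(pcharf_prime pchar_p). Qed.

(* The coefficient at [nu] of [g ^+ p] only depends on [pstrunc g nu], whose
   [p]-th power is computed termwise by the Frobenius morphism. *)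
Lemma ps_frob_sum (g : PS) nu : (g ^+ p) nu =
  \sum_(mu <- mbox nu) (if nu == mscale p mu then g mu ^+ p else 0).
Proof.
have pchar_PS := pchar_ps n pchar_p.
rewrite -{1}[g](subrK (pstrunc g nu)) exprDn_pchar; last first.
  by rewrite pnatE ?(pcharf_prime pchar_p).
rewrite psDE -(prednK pchar_gt0) exprS psM_low_eq0 ?add0r; last first.
  by move=> mu munu; rewrite psDE psNE pstruncE ?subrr.
rewrite prednK ?pchar_gt0 // -(pFrobenius_autE pchar_PS) rmorph_sum ps_sumE.
by apply: eq_bigr => mu _; rewrite /= pFrobenius_autE psmonX.
Qed.

Lemma ps_frobE (g : PS) la : (g ^+ p) la =
  if la == mscale p (mdiv p la) then g (mdiv p la) ^+ p else 0.
Proof.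
rewrite ps_frob_sum; case: ifPn => [/eqP la_eq|la_neq]; last first.
  rewrite big1 // => mu _; case: eqP => // la_eq.
  by move: la_neq; rewrite la_eq mdiv_mscale ?pchar_gt0 ?eqxx.
rewrite (bigD1_seq (mdiv p la)) ?mem_mbox ?mbox_uniq //=; last first.
  by apply/mleP => i; rewrite ffunE leq_div.
rewrite -la_eq eqxx big1 ?addr0 // => mu mu_neq; case: eqP => // la_mu.
by move: mu_neq; rewrite la_mu mdiv_mscale ?pchar_gt0 ?eqxx.
Qed.

Definition ps_pcomp (c : k -> k) (a : PS) (al : mi) : PS :=
  fun mu => c (a (madd (mscale p mu) al)).

Local Notation digits := (mbox [ffun _ : 'I_n => p.-1]).

Lemma mem_digits_mmod nu : mmod p nu \in digits.
Proof.
rewrite mem_mbox; apply/mleP => i; rewrite !ffunE -ltnS prednK ?pchar_gt0 //.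
by rewrite ltn_mod pchar_gt0.
Qed.

Lemma digits_eq_mmod al nu : al \in digits -> mle al nu ->
  msub nu al = mscale p (mdiv p (msub nu al)) -> al = mmod p nu.
Proof.
rewrite mem_mbox => /mleP al_lt /mleP alnu /ffunP nu_al; apply/ffunP => i.
move: (al_lt i) (alnu i) (nu_al i); rewrite !ffunE.
move: (_ %/ p)%N => q al_lt_i alnu_i nu_al_i.
have -> : nu i = (q * p + al i)%N by rewrite mulnC -nu_al_i subnK.
rewrite -ltnS prednK ?pchar_gt0 // in al_lt_i.
by rewrite (modnMDl q) modn_small.
Qed.

(* Writing [nu = p * (nu %/ p) + nu %% p] and every coefficient of [a] in the
   [k^p]-spanning family [b], [a] becomes a sum of [b j T^al] times [p]-th powers. *)
Lemma ps_pdecomp m (b : 'I_m -> k) (c : 'I_m -> k -> k) (a : PS) :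
  (forall x, x = \sum_(j < m) c j x ^+ p * b j) ->
  a = \sum_(j < m) \sum_(al <- digits) psmon (b j) al * ps_pcomp (c j) a al ^+ p.
Proof.
move=> c_span; apply: funext => nu; rewrite ps_sumE [LHS]c_span.
apply: eq_bigr => j _; rewrite ps_sumE (bigD1_seq (mmod p nu)) ?mbox_uniq //=; last first.
  exact: mem_digits_mmod.
have mmod_le : mle (mmod p nu) nu by apply/mleP => i; rewrite ffunE leq_mod.
have sub_mmod : msub nu (mmod p nu) = mscale p (mdiv p nu).
  by apply/ffunP => i; rewrite !ffunE {1}(divn_eq (nu i) p) addnK mulnC.
rewrite big_seq_cond big1 ?addr0; last first.
  move=> al /andP[al_dig al_neq]; rewrite psmon_mulE; case: ifP => // alnu.
  rewrite ps_frobE; case: eqP => [nu_al|]; last by rewrite mulr0.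
  by move: al_neq; rewrite (digits_eq_mmod al_dig alnu nu_al) eqxx.
rewrite psmon_mulE mmod_le ps_frobE sub_mmod mdiv_mscale ?pchar_gt0 // eqxx.
by rewrite /ps_pcomp mdivmod mulrC.
Qed.

End Monomials.

Section KaehlerRelations.
Variables (k : fieldType) (n : nat).
Local Notation PS := (PS k n).
Variables (A B : PS -> Prop).
Hypotheses (A1 : A 1) (AD : forall x y, A x -> A y -> A (x + y))
  (AM : forall x y, A x -> A y -> A (x * y)) (A0 : A 0) (B0 : B 0).

Definition in_relmod (v : pseries k n -> PS) :=
  exists l : seq (pseries k n * kahler_rel k n),
    (forall x, List.In x l -> A x.1 /\ rel_ok A B x.2) /\
    v = (fun g => \sum_(x <- l) ((x.1 : PS) * (rel_vec x.2 g : PS))).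

(* The generator [d a] of the free module, typed so that ring notations apply. *)
Definition dgen (a : PS) (g : pseries k n) : PS := ps_gen a g.

Lemma kaehler_zeroP : (forall a, A a -> in_relmod (dgen a)) -> kaehler_zero A B.
Proof. by []. Qed.

Lemma in_relmod_ext v w : (forall g, v g = w g) -> in_relmod v -> in_relmod w.
Proof. by move=> vw; rewrite (funext vw). Qed.

Lemma in_relmod0 : in_relmod (fun _ => 0).
Proof. by exists [::]; split => //; apply: funext => g; rewrite big_nil. Qed.

Lemma in_relmodD v w : in_relmod v -> in_relmod w -> in_relmod (fun g => v g + w g).
Proof.
move=> [l1 [l1_ok ->]] [l2 [l2_ok ->]]; exists (l1 ++ l2); split.
  by move=> x /(@List.in_app_or _ l1 l2)[/l1_ok | /l2_ok].
by apply: funext => g; rewrite big_cat.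
Qed.

Lemma in_relmodZ c v : A c -> in_relmod v -> in_relmod (fun g => c * v g).
Proof.
move=> Ac [l [l_ok ->]]; exists [seq (c * x.1 : pseries k n, x.2) | x <- l]; split.
  move=> _ /List.in_map_iff[x [<- /l_ok[Ax1 x2_ok]]]; split => //; exact: AM.
apply: funext => g; rewrite big_map mulr_sumr.
by apply: eq_bigr => x _; rewrite mulrA.
Qed.

Lemma in_relmod_rel x : rel_ok A B x -> in_relmod (rel_vec x).
Proof.
move=> x_ok; exists [:: ((1 : PS) : pseries k n, x)]; split; first by move=> y [<-|[]].
by apply: funext => g; rewrite big_seq1 mul1r.
Qed.

Lemma in_relmod_dD a b : A a -> A b ->
  in_relmod (fun g => dgen (a + b : PS) g - (dgen a g + dgen b g)).
Proof. by move=> Aa Ab; apply: (in_relmod_rel (x := RelAdd a b)). Qed.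

Lemma in_relmod_dM a b : A a -> A b ->
  in_relmod (fun g => dgen (a * b : PS) g - ((a : PS) * dgen b g + (b : PS) * dgen a g)).
Proof. by move=> Aa Ab; apply: (in_relmod_rel (x := RelMul a b)). Qed.

Lemma in_relmod_dconst c : B c -> in_relmod (dgen c).
Proof. by move=> Bc; apply: (in_relmod_rel (x := RelConst c)). Qed.

Lemma closed_exprn h j : A h -> A (h ^+ j).
Proof. by move=> Ah; elim: j => [|j IH]; rewrite ?expr0 // exprS; apply: AM. Qed.

Lemma in_relmod_dX h j : A h ->
  in_relmod (fun g => dgen (h ^+ j.+1) g - j.+1%:R * h ^+ j * dgen h g).
Proof.
move=> Ah; elim: j => [|j IH].
  by apply: in_relmod_ext in_relmod0 => g; rewrite expr1 expr0 mulr1 mul1r subrr.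
have := in_relmodD (in_relmod_dM Ah (closed_exprn j.+1 Ah)) (in_relmodZ Ah IH).
by apply: in_relmod_ext => g; rewrite [h ^+ j.+2]exprS exprS; ring.
Qed.

Variable p : nat.
Hypothesis pchar_p : p \in [pchar k].

Lemma in_relmod_dfrob h : A h -> in_relmod (dgen (h ^+ p)).
Proof.
move=> Ah; have /andP[_ /eqP p0] := pchar_ps n pchar_p.
apply: in_relmod_ext (in_relmod_dX p.-1 Ah) => g.
by rewrite prednK ?(pchar_gt0 pchar_p) // p0 !mul0r subr0.
Qed.

(* [d (q h^p) = h^p d q + p q h^(p-1) d h], where [d q] is a relation and [p = 0]. *)
Lemma in_relmod_dMfrob q h : A q -> B q -> A h -> in_relmod (dgen (q * h ^+ p)).
Proof.
move=> Aq Bq Ah; have Ahp := closed_exprn p Ah.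
have := in_relmodD (in_relmod_dM Aq Ahp)
  (in_relmodD (in_relmodZ Aq (in_relmod_dfrob Ah)) (in_relmodZ Ahp (in_relmod_dconst Bq))).
by apply: in_relmod_ext => g; rewrite subrK.
Qed.

Lemma in_relmod_dsum I (s : seq I) (P : pred I) (F : I -> PS) :
  (forall i, P i -> A (F i) /\ in_relmod (dgen (F i))) ->
  A (\sum_(i <- s | P i) F i) /\ in_relmod (dgen (\sum_(i <- s | P i) F i)).
Proof.
move=> F_ok; apply: (big_ind (fun t => A t /\ in_relmod (dgen t))) => //.
  by split; [exact: A0 | exact: in_relmod_dconst].
move=> x y [Ax dx] [Ay dy]; split; first exact: AD.
by apply: in_relmod_ext (in_relmodD (in_relmod_dD Ax Ay) (in_relmodD dx dy)) => g; rewrite subrK.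
Qed.

End KaehlerRelations.

Section NonArchimedeanAbs.
Variables (R : realType) (k : fieldType) (abs : k -> R).
Hypothesis abs_na : nonarch_abs abs.

Lemma abs_ge0 x : 0 <= abs x. Proof. by case: abs_na. Qed.
Lemma abs_eq0 x : abs x = 0 <-> x = 0. Proof. by case: abs_na. Qed.
Lemma absM x y : abs (x * y) = abs x * abs y. Proof. by case: abs_na. Qed.
Lemma absD_max x y : abs (x + y) <= Num.max (abs x) (abs y). Proof. by case: abs_na. Qed.

Lemma abs0 : abs 0 = 0. Proof. exact/abs_eq0. Qed.

Lemma abs1 : abs 1 = 1.
Proof.
have abs1_neq0 : abs 1 != 0 by apply/eqP => /abs_eq0/eqP; rewrite oner_eq0.
by apply: (mulfI abs1_neq0); rewrite mulr1 -absM mulr1.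
Qed.

Lemma absN x : abs (- x) = abs x.
Proof.
have absN1 : abs (-1) = 1.
  have /eqP : abs (-1) ^+ 2 = 1 by rewrite expr2 -absM mulrNN mulr1 abs1.
  rewrite sqrf_eq1 => /orP[/eqP //|/eqP absN1].
  by have := abs_ge0 (-1); rewrite absN1; lra.
by rewrite -mulN1r absM absN1 mul1r.
Qed.

Lemma absX x j : abs (x ^+ j) = abs x ^+ j.
Proof. by elim: j => [|j IH]; rewrite ?expr0 ?abs1 // !exprS absM IH. Qed.

Lemma abs_subC x y : abs (x - y) = abs (y - x).
Proof. by rewrite -absN opprB. Qed.

Lemma abs_ltD x y e : abs x < e -> abs y < e -> abs (x + y) < e.
Proof. by move=> xe ye; apply: le_lt_trans (absD_max x y) _; rewrite gt_max xe ye. Qed.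

Lemma abs_sum_lt I (s : seq I) (P : pred I) (F : I -> k) e : 0 < e ->
  (forall i, P i -> abs (F i) < e) -> abs (\sum_(i <- s | P i) F i) < e.
Proof.
move=> e_gt0 Fe; apply: (big_ind (fun x => abs x < e)) => //; first by rewrite abs0.
by move=> x y; apply: abs_ltD.
Qed.

End NonArchimedeanAbs.

Section TateAlgebra.
Variables (R : realType) (k : fieldType) (abs : k -> R).
Hypothesis abs_na : nonarch_abs abs.
Variables (n : nat) (r : 'I_n -> R).
Hypothesis r_gt0 : forall i, 0 < r i.
Local Notation PS := (PS k n).
Local Notation tate := (tate_series abs r).

Definition rpow (nu : mindex n) : R := \prod_(i < n) r i ^+ nu i.

Lemma rpow_gt0 nu : 0 < rpow nu.
Proof. by apply: prodr_gt0 => i _; apply: exprn_gt0. Qed.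

Lemma rpowD x y : rpow (madd x y) = rpow x * rpow y.
Proof. by rewrite /rpow -big_split; apply: eq_bigr => i _; rewrite ffunE exprD. Qed.

Lemma rpow_mscale j mu : rpow (mscale j mu) = rpow mu ^+ j.
Proof. by rewrite /rpow -prodrXl; apply: eq_bigr => i _; rewrite ffunE mulnC exprM. Qed.

Lemma tate_seriesP (f : PS) : tate f <->
  forall eps, 0 < eps -> exists s : seq (mindex n),
    forall nu, nu \notin s -> abs (f nu) * rpow nu < eps.
Proof.
split=> f_tate eps /f_tate[s f_s]; exists s => nu.
  by rewrite ltNge => nu_s; apply/negP => /f_s; apply/negP.
by move=> f_nu; apply/negPn/negP => /f_s; rewrite /rpow; lra.
Qed.

Lemma tate_series_bounded (f : PS) : tate f ->
  exists M, 0 < M /\ forall nu, abs (f nu) * rpow nu <= M.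
Proof.
move=> /tate_seriesP /(_ 1 ltr01)[s f_small].
have sum_ge0 (s' : seq (mindex n)) : 0 <= \sum_(x <- s') abs (f x) * rpow x.
  by rewrite sumr_ge0 // => nu _; rewrite mulr_ge0 ?abs_ge0 // ltW ?rpow_gt0.
exists (1 + \sum_(x <- s) abs (f x) * rpow x); split=> [|nu].
  by have := sum_ge0 s; lra.
have [nu_s|nu_s] := boolP (nu \in s).
  by rewrite (big_rem nu nu_s) /=; have := sum_ge0 (rem nu s); lra.
by have := f_small nu nu_s; have := sum_ge0 s; lra.
Qed.

Lemma tate_series_poly (f : PS) : is_poly f -> tate f.
Proof.
move=> [s f_s] eps eps_gt0; exists s => nu; apply: contraLR => /f_s ->.
by rewrite abs0 // mul0r -ltNge.
Qed.

Lemma tate_seriesD (f g : PS) : tate f -> tate g -> tate (f + g).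
Proof.
move=> /tate_seriesP f_tate /tate_seriesP g_tate; apply/tate_seriesP => eps eps_gt0.
have [[s1 f_s1] [s2 g_s2]] := (f_tate _ eps_gt0, g_tate _ eps_gt0).
exists (s1 ++ s2) => nu; rewrite mem_cat negb_or => /andP[/f_s1 f_nu /g_s2 g_nu].
apply: le_lt_trans (ler_wpM2r (ltW (rpow_gt0 nu)) (absD_max abs_na _ _)) _.
by rewrite maxr_pMl ?gt_max ?f_nu ?g_nu // ltW ?rpow_gt0.
Qed.

(* If [nu = mu + mu'] lies outside [s1 + s2], then [mu \notin s1] or
   [mu' \notin s2], so one factor is small while the other stays bounded. *)
Lemma tate_seriesM (f g : PS) : tate f -> tate g -> tate (f * g).
Proof.
move=> f_tate g_tate.
have [[Mf [Mf_gt0 f_bd]] [Mg [Mg_gt0 g_bd]]] :=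
  (tate_series_bounded f_tate, tate_series_bounded g_tate).
move/tate_seriesP: f_tate; move/tate_seriesP: g_tate => g_small f_small.
apply/tate_seriesP => eps eps_gt0.
have [s1 f_s1] := f_small _ (divr_gt0 eps_gt0 Mg_gt0).
have [s2 g_s2] := g_small _ (divr_gt0 eps_gt0 Mf_gt0).
exists [seq madd x y | x <- s1, y <- s2] => nu nu_s.
rewrite -ltr_pdivlMr ?rpow_gt0 // psME big_seq.
apply: abs_sum_lt; rewrite ?divr_gt0 ?rpow_gt0 // => mu; rewrite mem_mbox => munu.
have rpow_nu : rpow nu = rpow mu * rpow (msub nu mu) by rewrite -rpowD subnmK.
rewrite ltr_pdivlMr ?rpow_gt0 // (absM abs_na) rpow_nu.
set X := abs (f mu) * rpow mu; set Y := abs (g (msub nu mu)) * rpow (msub nu mu).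
have -> : abs (f mu) * abs (g (msub nu mu)) * (rpow mu * rpow (msub nu mu)) = X * Y.
  by rewrite /X /Y; ring.
have X_ge0 : 0 <= X by rewrite mulr_ge0 ?abs_ge0 // ltW ?rpow_gt0.
have Y_ge0 : 0 <= Y by rewrite mulr_ge0 ?abs_ge0 // ltW ?rpow_gt0.
have [XM YM] : X <= Mf /\ Y <= Mg by split; [apply: f_bd | apply: g_bd].
have [mu_s1|/f_s1] := boolP (mu \in s1); last by rewrite -/X ltr_pdivlMr //; nra.
have /g_s2 : msub nu mu \notin s2.
  apply: contra nu_s => nu_mu_s2; rewrite -(subnmK munu).
  exact: (allpairs_f (@madd n) mu_s1 nu_mu_s2).
by rewrite -/Y ltr_pdivlMr //; nra.
Qed.

Lemma tate_series_psmon c mu : tate (psmon c mu).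
Proof. exact/tate_series_poly/is_poly_psmon. Qed.

Lemma tate_series0 : tate (0 : PS).
Proof. by apply: tate_series_poly; exists [::]. Qed.

Lemma tate_series1 : tate (1 : PS).
Proof. exact: (tate_series_psmon 1 (mzero n)). Qed.

End TateAlgebra.

Section Limits.
Variables (R : realType) (k : fieldType) (abs : k -> R).
Hypotheses (abs_na : nonarch_abs abs) (abs_cplt : abs_complete abs).

Definition tends_to (u : nat -> k) (L : k) := forall eps, 0 < eps ->
  exists N, forall s, (N <= s)%N -> abs (u s - L) < eps.

Lemma abs_small_eq0 x : (forall eps, 0 < eps -> abs x < eps) -> x = 0.
Proof.
move=> x_small; apply/(abs_eq0 abs_na)/eqP; rewrite eq_le abs_ge0 // andbT leNgt.
by apply/negP => /x_small; rewrite ltxx.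
Qed.

Lemma tends_to_unique u L L' : tends_to u L -> tends_to u L' -> L = L'.
Proof.
move=> uL uL'; apply/eqP; rewrite -subr_eq0; apply/eqP/abs_small_eq0 => eps eps_gt0.
have [[N1 uN1] [N2 uN2]] := (uL _ eps_gt0, uL' _ eps_gt0).
have L_uN : abs (L - u (maxn N1 N2)) < eps by rewrite abs_subC // uN1 // leq_maxl.
by have := abs_ltD abs_na L_uN (uN2 _ (leq_maxr N1 N2)); rewrite addrA subrK.
Qed.

Lemma tends_to_steps u L : tends_to u L -> tends_to (fun s => u s.+1 - u s) 0.
Proof.
move=> uL eps /uL[N uN]; exists N => s Ns; rewrite subr0.
have -> : u s.+1 - u s = (u s.+1 - L) + (L - u s) by rewrite addrA subrK.
by apply: abs_ltD => //; rewrite ?(abs_subC abs_na L) uN // (leq_trans Ns).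
Qed.

(* In an ultrametric space a sequence with vanishing steps is Cauchy. *)
Lemma tends_to_of_steps u : tends_to (fun s => u s.+1 - u s) 0 -> exists L, tends_to u L.
Proof.
move=> steps0; apply: abs_cplt => eps eps_gt0; have [N uN] := steps0 _ eps_gt0.
exists N.
suff le_case a c : (N <= a)%N -> (a <= c)%N -> abs (u c - u a) < eps.
  move=> a c Na Nc; have [ac|/ltnW ca] := leqP a c.
    by rewrite abs_subC // le_case.
  exact: le_case.
move=> Na ac; rewrite -telescope_sumr // big_nat_cond.
apply: abs_sum_lt => // t /andP[/andP[a_t _] _].
by rewrite -[_ - _]subr0 uN // (leq_trans Na).
Qed.

Lemma eventually_invS_lt (eps : R) : 0 < eps ->
  exists N, forall s, (N <= s)%N -> (s.+1%:R)^-1 < eps.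
Proof.
move=> eps_gt0; exists (Num.Def.archi_bound eps^-1) => s Ns.
rewrite -[eps]invrK ltf_pV2 ?posrE ?invr_gt0 ?ltr0Sn //.
apply: lt_le_trans (archi_boundP _) _; first by rewrite invr_ge0 ltW.
by rewrite ler_nat (leq_trans Ns).
Qed.

End Limits.

Section FrobeniusSpan.
Variables (R : realType) (k : fieldType) (abs : k -> R) (p : nat).
Hypotheses (abs_na : nonarch_abs abs) (abs_cplt : abs_complete abs)
  (pchar_p : p \in [pchar k]).
Local Notation tends_to := (tends_to abs).

Lemma frobD (x y : k) : (x + y) ^+ p = x ^+ p + y ^+ p.
Proof. exact: (rmorphD (pFrobenius_aut pchar_p)). Qed.

Lemma frob0 : (0 : k) ^+ p = 0.
Proof. by rewrite expr0n gtn_eqF ?(pchar_gt0 pchar_p). Qed.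

Lemma frobN (x : k) : (- x) ^+ p = - x ^+ p.
Proof. exact: (rmorphN (pFrobenius_aut pchar_p)). Qed.

Lemma frobB (x y : k) : (x - y) ^+ p = x ^+ p - y ^+ p.
Proof. exact: (rmorphB (pFrobenius_aut pchar_p)). Qed.

Lemma abs_frob_le (x : k) : abs x <= 1 -> abs x ^+ p <= abs x.
Proof.
move=> x_le1; rewrite -(prednK (pchar_gt0 pchar_p)) exprS.
by rewrite ler_piMr ?abs_ge0 // exprn_ile1 ?abs_ge0.
Qed.

Section Span.
Variables (m : nat) (b : 'I_m -> k).

Definition pspan (x : k) := exists c : 'I_m -> k, x = \sum_(i < m) c i ^+ p * b i.

Definition coord_bound (C : R) := forall x, pspan x -> exists c : 'I_m -> k,
  x = \sum_(i < m) c i ^+ p * b i /\ forall i, abs (c i) ^+ p <= C * abs x.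

Lemma pspanN x : pspan x -> pspan (- x).
Proof.
move=> [c ->]; exists (fun i => - c i); rewrite -sumrN; apply: eq_bigr => i _.
by rewrite frobN mulNr.
Qed.

Lemma pspanB x y : pspan x -> pspan y -> pspan (x - y).
Proof.
move=> [c ->] [e ->]; exists (fun i => c i - e i); rewrite -sumrB.
by apply: eq_bigr => i _; rewrite frobB mulrBl.
Qed.

Lemma pspan_divX x c : c != 0 -> pspan x -> pspan (x / c ^+ p).
Proof.
move=> c_neq0 [e ->]; exists (fun i => e i / c); rewrite mulr_suml.
by apply: eq_bigr => i _; rewrite exprMn exprVn mulrAC.
Qed.

Lemma tends_to_pspan (d : nat -> 'I_m -> k) (L : 'I_m -> k) :
  (forall i, tends_to (d^~ i) (L i)) ->
  tends_to (fun s => \sum_(i < m) d s i ^+ p * b i) (\sum_(i < m) L i ^+ p * b i).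
Proof.
move=> dL eps eps_gt0.
pose B := 1 + \sum_(i < m) abs (b i).
have b_lt i : abs (b i) < B.
  rewrite /B (bigD1 i) //=; have : 0 <= \sum_(j < m | j != i) abs (b j).
    by rewrite sumr_ge0 // => j _; apply: abs_ge0.
  lra.
have B_gt0 : 0 < B by rewrite /B ltr_pwDl ?sumr_ge0 // => i _; apply: abs_ge0.
pose eps1 := Num.min 1 (eps / B).
have eps1_gt0 : 0 < eps1 by rewrite lt_min ltr01 divr_gt0.
have /choice[N dN] i : exists N, forall s, (N <= s)%N -> abs (d s i - L i) < eps1.
  exact: dL.
exists (\max_(i < m) N i) => s Ns; rewrite -sumrB; apply: abs_sum_lt => // i _.
have x_lt := dN i s (leq_trans (leq_bigmax i) Ns).
rewrite -mulrBl -frobB (absM abs_na) (absX abs_na).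
have x_le1 : abs (d s i - L i) <= 1.
  by apply/ltW/(lt_le_trans x_lt); rewrite ge_min lexx.
have x_lt_eps : abs (d s i - L i) * B < eps.
  by rewrite -ltr_pdivlMr //; apply: (lt_le_trans x_lt); rewrite ge_min lexx orbT.
apply: le_lt_trans x_lt_eps.
by apply: ler_pM; rewrite ?exprn_ge0 ?abs_ge0 ?abs_frob_le // ltW.
Qed.

(* Coordinates of the steps of [y] are small by [coord_bound], so the summed
   coordinates converge in the complete field [k]. *)
Lemma pspan_closed C (y : nat -> k) w : 0 < C -> coord_bound C ->
  (forall s, pspan (y s)) -> tends_to y w -> pspan w.
Proof.
move=> C_gt0 C_bd y_span yw.
have [c0 [y0E _]] := C_bd _ (y_span 0%N).
have /choice[e eE] s : exists e : 'I_m -> k, y s.+1 - y s = \sum_(i < m) e i ^+ p * b i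
    /\ forall i, abs (e i) ^+ p <= C * abs (y s.+1 - y s).
  by apply: C_bd; apply: pspanB.
pose d s i := c0 i + \sum_(0 <= t < s) e t i.
have yE s : y s = \sum_(i < m) d s i ^+ p * b i.
  elim: s => [|s IH]; first by rewrite y0E; apply: eq_bigr => i _; rewrite /d big_geq ?addr0.
  rewrite -[y s.+1](subrK (y s)) (eE s).1 IH -big_split; apply: eq_bigr => i _.
  by rewrite /d big_nat_recr //= addrA [in RHS]frobD mulrDl addrC.
have d_steps i : tends_to (fun s => d s.+1 i - d s i) 0.
  move=> eps eps_gt0; have epsp_gt0 : 0 < eps ^+ p by rewrite exprn_gt0.
  have [N yN] := tends_to_steps abs_na yw (divr_gt0 epsp_gt0 C_gt0).
  exists N => s Ns.
  have -> : d s.+1 i - d s i - 0 = e s i by rewrite /d big_nat_recr //=; ring.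
  rewrite -(ltr_pXn2r (pchar_gt0 pchar_p)) ?nnegrE ?abs_ge0 ?ltW //.
  apply: le_lt_trans ((eE s).2 i) _; rewrite -ltr_pdivlMl // mulrC.
  by have := yN s Ns; rewrite subr0.
have /choice[L dL] i : exists L, tends_to (d^~ i) L.
  exact: (tends_to_of_steps abs_na abs_cplt (d_steps i)).
exists L; apply: (tends_to_unique abs_na yw).
by rewrite (funext yE); apply: tends_to_pspan.
Qed.

Lemma pspan_dist C bm : 0 < C -> coord_bound C -> ~ pspan bm ->
  exists2 dl, 0 < dl & forall y, pspan y -> dl <= abs (bm + y).
Proof.
move=> C_gt0 C_bd bm_out.
case: (pselect (exists2 dl, 0 < dl & forall y, pspan y -> dl <= abs (bm + y))) => // no_dl.
have /choice[y yE] s : exists y, pspan y /\ abs (bm + y) < (s.+1%:R)^-1.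
  apply: contrapT => no_y; apply: no_dl; exists (s.+1%:R)^-1; first by rewrite invr_gt0 ltr0Sn.
  by move=> y y_span; rewrite leNgt; apply/negP => y_close; apply: no_y; exists y.
case: bm_out; apply: (@pspan_closed C (fun s => - y s)) => // [s|eps eps_gt0].
  exact/pspanN/(yE s).1.
have [N invN] := eventually_invS_lt eps_gt0; exists N => s Ns.
by rewrite -opprD (absN abs_na) addrC (lt_trans (yE s).2) ?invN.
Qed.

End Span.

End FrobeniusSpan.

Section CoordinateBound.
Variables (R : realType) (k : fieldType) (abs : k -> R) (p : nat).
Hypotheses (abs_na : nonarch_abs abs) (abs_cplt : abs_complete abs)
  (pchar_p : p \in [pchar k]).
Local Notation pspan := (pspan p).
Local Notation coord_bound := (coord_bound abs p).

Definition ord_cons m (x : k) (d : 'I_m -> k) (i : 'I_m.+1) : k :=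
  if unlift ord0 i is Some j then d j else x.

Lemma sum_ord_cons m x (d : 'I_m -> k) (F : 'I_m.+1 -> k -> k) :
  \sum_(i < m.+1) F i (ord_cons x d i) = F ord0 x + \sum_(j < m) F (lift ord0 j) (d j).
Proof. by rewrite big_ord_recl /ord_cons unlift_none; under eq_bigr do rewrite liftK. Qed.

Lemma ord_consP m x (d : 'I_m -> k) (P : k -> Prop) :
  P x -> (forall j, P (d j)) -> forall i, P (ord_cons x d i).
Proof. by move=> Px Pd i; rewrite /ord_cons; case: unliftP. Qed.

Section Cons.
Variables (m : nat) (b : 'I_m.+1 -> k).
Local Notation b0 := (b ord0).
Local Notation b' := (fun j => b (lift ord0 j)).

Lemma pspan_cons x : pspan b x ->
  exists c0 y, pspan b' y /\ x = c0 ^+ p * b0 + y.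
Proof.
move=> [c ->]; exists (c ord0), (\sum_(j < m) c (lift ord0 j) ^+ p * b' j).
by split; [exists (fun j => c (lift ord0 j)) | rewrite big_ord_recl].
Qed.

Lemma coord_bound_cons_dep C : 0 <= C -> pspan b' b0 ->
  coord_bound b' C -> coord_bound b C.
Proof.
move=> C_ge0 [g b0E] C_bd x /pspan_cons[c0 [_ [[e ->] xE]]].
have [|d [xd d_bd]] := C_bd x.
  exists (fun j => c0 * g j + e j); rewrite xE b0E mulr_sumr -big_split.
  by apply: eq_bigr => j _; rewrite frobD // exprMn mulrDl mulrA.
exists (ord_cons 0 d); split.
  by rewrite (sum_ord_cons _ _ (fun i v => v ^+ p * b i)) frob0 // mul0r add0r.
apply: (@ord_consP _ 0 d (fun v => abs v ^+ p <= C * abs x)) d_bd.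
by rewrite -(absX abs_na) frob0 // abs0 // mulr_ge0 ?abs_ge0.
Qed.

Lemma coord_bound_cons_indep C : 0 < C -> ~ pspan b' b0 -> coord_bound b' C ->
  exists2 C', 0 < C' & coord_bound b C'.
Proof.
move=> C_gt0 b0_out C_bd.
have [dl dl_gt0 dl_le] := pspan_dist abs_na abs_cplt pchar_p C_gt0 C_bd b0_out.
have u_gt0 : 0 < dl^-1 by rewrite invr_gt0.
have B_ge0 := abs_ge0 abs_na b0.
have Bu_ge0 := mulr_ge0 B_ge0 (ltW u_gt0).
exists (dl^-1 + C * (1 + abs b0 * dl^-1)); first by nra.
move=> x /pspan_cons[c0 [y [y_span xE]]].
have [X_ge0 P_ge0] : 0 <= abs x /\ 0 <= abs c0 ^+ p by rewrite abs_ge0 // exprn_ge0 ?abs_ge0.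
(* [b0] stays at distance [dl] from the span of [b'], which bounds [c0]. *)
have c0_bd : abs c0 ^+ p <= abs x * dl^-1.
  rewrite ler_pdivlMr //; have [->|c0_neq0] := eqVneq c0 0.
    by rewrite -(absX abs_na) frob0 // abs0 // mul0r.
  have c0p_neq0 : c0 ^+ p != 0 by rewrite expf_neq0.
  have -> : x = c0 ^+ p * (b0 + y / c0 ^+ p) by rewrite xE; field.
  rewrite (absM abs_na) (absX abs_na) ler_wpM2l //.
  exact/dl_le/pspan_divX.
have y_bd : abs y <= abs x + abs c0 ^+ p * abs b0.
  have -> : y = x - c0 ^+ p * b0 by rewrite xE addrC addKr.
  apply: le_trans (absD_max abs_na _ _) _.
  rewrite (absN abs_na) (absM abs_na) (absX abs_na) ge_max.
  by apply/andP; split; nra.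
have [d [yd d_bd]] := C_bd y y_span.
exists (ord_cons c0 d); split.
  by rewrite (sum_ord_cons _ _ (fun i v => v ^+ p * b i)) xE yd.
have y_bd' : abs y <= (1 + abs b0 * dl^-1) * abs x.
  by apply: le_trans y_bd _; have := ler_wpM2l B_ge0 c0_bd; nra.
have K_ge0 : 0 <= C * (1 + abs b0 * dl^-1) by nra.
apply: (@ord_consP _ c0 d (fun v => abs v ^+ p <= _ * abs x)) => [|j].
  by apply: le_trans c0_bd _; nra.
apply: le_trans (d_bd j) _; apply: le_trans (ler_wpM2l (ltW C_gt0) y_bd') _.
by nra.
Qed.

End Cons.

Lemma coord_bound_exists m (b : 'I_m -> k) : exists2 C, 0 < C & coord_bound b C.
Proof.
elim: m b => [|m IH] b.
  by exists 1 => // x [c ->]; exists c; split => // [[]].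
have [C C_gt0 C_bd] := IH (fun j => b (lift ord0 j)).
have [b0_in|b0_out] := pselect (pspan (fun j => b (lift ord0 j)) (b ord0)).
  by exists C => //; apply: coord_bound_cons_dep => //; apply: ltW.
exact: coord_bound_cons_indep C_gt0 b0_out C_bd.
Qed.

End CoordinateBound.

Section PComponents.
Variables (R : realType) (k : fieldType) (abs : k -> R) (p n : nat) (r : 'I_n -> R).
Hypotheses (abs_na : nonarch_abs abs) (pchar_p : p \in [pchar k])
  (r_gt0 : forall i, 0 < r i).
Local Notation tate := (tate_series abs r).

(* Since [|c x|^p <= C |x|], the weights satisfy
   [(|c (a_(p mu + al))| r^mu)^p <= C r^(-al) |a_(p mu + al)| r^(p mu + al)]. *)
Lemma tate_series_pcomp (c : k -> k) C (a : PS k n) al : 0 < C ->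
  (forall x, abs (c x) ^+ p <= C * abs x) -> tate a -> tate (ps_pcomp p c a al).
Proof.
move=> C_gt0 c_bd /tate_seriesP a_tate; apply/tate_seriesP => eps eps_gt0.
have p_gt0 := pchar_gt0 pchar_p.
have ral_gt0 := rpow_gt0 r_gt0 al.
have epsp_gt0 : 0 < eps ^+ p by rewrite exprn_gt0.
have [s a_s] := a_tate _ (divr_gt0 (mulr_gt0 epsp_gt0 ral_gt0) C_gt0).
exists [seq mdiv p (msub x al) | x <- s] => mu mu_out.
pose nu := madd (mscale p mu) al.
have nu_out : nu \notin s.
  apply: contra mu_out => nu_s; apply/mapP; exists nu => //.
  by apply/ffunP => i; rewrite !ffunE addnK mulKn.
have := a_s nu nu_out; rewrite rpowD rpow_mscale ltr_pdivlMr // => a_nu.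
rewrite -(ltr_pXn2r p_gt0) ?nnegrE ?mulr_ge0 ?abs_ge0 ?ltW ?rpow_gt0 // exprMn.
have c_bd_nu : abs (c (a nu)) ^+ p * (rpow r mu ^+ p * rpow r al) <=
    C * abs (a nu) * (rpow r mu ^+ p * rpow r al).
  by rewrite ler_wpM2r ?c_bd // mulr_ge0 ?exprn_ge0 ?ltW ?rpow_gt0.
rewrite -(ltr_pM2r ral_gt0) -mulrA; apply: le_lt_trans c_bd_nu _.
by rewrite -mulrA mulrC.
Qed.

End PComponents.

Section KaehlerTerms.
Variables (R : realType) (k : fieldType) (abs : k -> R) (p n : nat) (r : 'I_n -> R).
Hypotheses (abs_na : nonarch_abs abs) (pchar_p : p \in [pchar k])
  (r_gt0 : forall i, 0 < r i).
Local Notation tate := (tate_series abs r).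
Local Notation in_relmod := (in_relmod tate (@is_poly k n)).

Lemma in_relmod_dsum_tate I (s : seq I) (P : pred I) (F : I -> PS k n) :
  (forall i, P i -> tate (F i) /\ in_relmod (dgen (F i))) ->
  tate (\sum_(i <- s | P i) F i) /\ in_relmod (dgen (\sum_(i <- s | P i) F i)).
Proof.
apply: (in_relmod_dsum (tate_series1 abs_na r) (tate_seriesD abs_na r_gt0)).
  exact: tate_series0.
by exists [::].
Qed.

Lemma in_relmod_dmonfrob c al (h : PS k n) : tate h ->
  tate (psmon c al * h ^+ p) /\ in_relmod (dgen (psmon c al * h ^+ p)).
Proof.
move=> h_tate; have tate1 := tate_series1 abs_na r; have tateM := tate_seriesM abs_na r_gt0.
have hp_tate := closed_exprn tate1 tateM p h_tate.
have mon_tate := tate_series_psmon abs_na r c al.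
split; first exact: tateM.
by apply: in_relmod_dMfrob => //; apply: is_poly_psmon.
Qed.

End KaehlerTerms.

Theorem lemma2p15 (R : realType) (k : fieldType) (abs : k -> R) (p n : nat)
    (r : 'I_n -> R) :
  nonarch_abs abs -> abs_complete abs ->
  p \in [pchar k] ->
  (forall i, 0 < r i) ->
  finite_p_degree k p ->
  kaehler_zero (tate_series abs r) (@is_poly k n).
Proof.
move=> abs_na abs_cplt pchar_p r_gt0 [m [b b_span]].
have [C C_gt0 C_bd] := coord_bound_exists abs_na abs_cplt pchar_p b.
have /choice[c c_ok] x : exists c : 'I_m -> k,
    x = \sum_(i < m) c i ^+ p * b i /\ forall i, abs (c i) ^+ p <= C * abs x.
  exact/C_bd/b_span.
apply: kaehler_zeroP => a a_tate.
rewrite (ps_pdecomp pchar_p (c := fun j x => c x j) a (fun x => (c_ok x).1)).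
have dsum := in_relmod_dsum_tate abs_na r_gt0.
apply: (dsum _ _ _ _ _).2 => j _; apply: dsum => al _.
apply: (in_relmod_dmonfrob abs_na pchar_p r_gt0).
exact: tate_series_pcomp (fun x => (c_ok x).2 j) a_tate.
Qed.
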